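(* Let $A,B$ be real symmetric $n\times n$ matrices, $f,g\in\mathbb{R}^n$, $\mu\in\mathbb{R}$, and consider the problem (QP1QC): $\inf\, x^TAx-2f^Tx$ subject to $x^TBx-2g^Tx\le\mu$. Suppose the primal Slater condition holds (there exists $x_0$ with $x_0^TBx_0-2g^Tx_0<\mu$), the optimal value of (QP1QC) is finite, and $I_{\succeq}(A,B)=\{\sigma\in\mathbb{R}: A+\sigma B\succeq 0\}$ is an interval containing more than one point. Then the infimum of (QP1QC) is attained.
   Context: $A+\sigma B\succeq 0$ means positive semidefinite. *)

From mathcomp Require Import all_boot all_order all_algebra.
From mathcomp Require Import reals.
Set Implicit Arguments. Unset Strict Implicit. Unset Printing Implicit Defensive.
Import Order.TTheory GRing.Theory Num.Theory.
Local Open Scope ring_scope.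

Definition qform {R : realType} {n : nat} (M : 'M[R]_n) (x : 'cV[R]_n) : R :=
  (x^T *m M *m x) 0 0.

Definition lform {R : realType} {n : nat} (h x : 'cV[R]_n) : R :=
  (h^T *m x) 0 0.

Definition psd {R : realType} {n : nat} (M : 'M[R]_n) : Prop :=
  forall v : 'cV[R]_n, 0 <= qform M v.

Definition qp_obj {R : realType} {n : nat} (A : 'M[R]_n) (f x : 'cV[R]_n) : R :=
  qform A x - 2 * lform f x.

Definition qp_feas {R : realType} {n : nat} (B : 'M[R]_n) (g : 'cV[R]_n) (mu : R)
  (x : 'cV[R]_n) : Prop :=
  qform B x - 2 * lform g x <= mu.

Definition I_psd {R : realType} {n : nat} (A B : 'M[R]_n) (s : R) : Prop :=
  psd (A + s *: B).

From mathcomp Require Import all_boot all_order all_algebra.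
From mathcomp Require Import reals.
From mathcomp Require Import boolp classical_sets topology normedtype derive.
From mathcomp Require Import matrix_topology matrix_normedtype.
From mathcomp Require Import ring lra.
Set Implicit Arguments. Unset Strict Implicit. Unset Printing Implicit Defensive.
Import Order.TTheory GRing.Theory Num.Theory.
Import numFieldTopology.Exports numFieldNormedType.Exports.
Local Open Scope classical_set_scope.
Local Open Scope ring_scope.

(* If some d has d'Ad <= 0 and d'Bd < 0, then far along the line x + t d
   every point is feasible; a finite value forces the objective to be constant along d,
   so the problem is effectively unconstrained, and a quadratic bounded below attains its
   minimum (its linear part lies in the range of its positive semidefinite matrix).  If
   some d in ker A /\ ker B has g'd <> 0, moving along d reaches the boundary of the
   constraint from any point; finiteness gives a multiplier lam >= 0, and a minimizer of
   the unconstrained Lagrangian with matrix A + lam B, moved to the boundary, solves the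
   problem.  Otherwise the data are invariant under ker A /\ ker B, so one may restrict
   to its orthogonal complement, where two distinct points of I_psd(A,B) make
   max(x'Ax, x'Bx) coercive: the feasible sublevel sets are compact. *)

Section real_quadratics.
Variable R : realFieldType.
Implicit Types a b c d e g t L T : R.

Lemma ge0_slope_of_ray_lbound t0 L c b :
  (forall t, t0 <= t -> L <= c + b * t) -> 0 <= b.
Proof.
move=> H; rewrite leNgt; apply/negP => b0.
pose t := `|t0| + `|c - L| / - b + 1.
have tb : b * t = b * `|t0| - `|c - L| + b.
  by rewrite /t; field; rewrite lt_eqF.
have t0t : t0 <= t.
  have : 0 <= `|c - L| / - b by rewrite divr_ge0 // oppr_ge0 ltW.
  by have := ler_norm t0; rewrite /t; lra.
have := H t t0t; have := ler_norm (c - L); clearbody t.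
have := mulr_le0_ge0 (ltW b0) (normr_ge0 t0).
lra.
Qed.

Lemma slope_eq0_of_lbound L c b : (forall t, L <= c + b * t) -> b = 0.
Proof.
move=> H; have b_ge0 := @ge0_slope_of_ray_lbound 0 L c b (fun t _ => H t).
have : 0 <= - b by apply: (@ge0_slope_of_ray_lbound 0 L c) => t _; rewrite mulNr -mulrN.
by lra.
Qed.

Lemma ge0_lead_of_ray_lbound t0 L a :
  (forall t, t0 <= t -> L <= a * t ^+ 2) -> 0 <= a.
Proof.
move=> H; rewrite leNgt; apply/negP => a0.
suff: 0 <= a by lra.
apply: (@ge0_slope_of_ray_lbound (Num.max t0 1) L 0) => t; rewrite ge_max => /andP[t0t t1].
have : a * t ^+ 2 <= a * t.
  have : 0 <= t * (t - 1) by apply: mulr_ge0; lra.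
  by rewrite expr2; nra.
by have := H t t0t; lra.
Qed.

Lemma ge0_lead_of_lbound L a b : (forall t, L <= b * t + a * t ^+ 2) -> 0 <= a.
Proof.
move=> H; apply: (@ge0_lead_of_ray_lbound 0 L) => t _.
by have := H t; have := H (- t); rewrite sqrrN; lra.
Qed.

Lemma slope_eq0_of_quad_ge0 a b : (forall t, 0 <= b * t + a * t ^+ 2) -> b = 0.
Proof.
move=> H; apply/eqP/negPn/negP => b0.
pose k := `|a| + 1.
have k0 : 0 < k by rewrite /k ltr_wpDl.
have := H (- b / k).
have -> : b * (- b / k) + a * (- b / k) ^+ 2 = b ^+ 2 * (a - k) / k ^+ 2.
  by field; rewrite gt_eqF.
rewrite pmulr_lge0 ?invr_gt0 ?exprn_gt0 // pmulr_rge0 ?exprn_even_gt0 //.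
by have := ler_norm a; rewrite /k; lra.
Qed.

Lemma concave_quad_le0_far e g d : d < 0 ->
  exists T, forall t, T <= `|t| -> e + 2 * t * g + t ^+ 2 * d <= 0.
Proof.
move=> d0; pose Q := `|e| + 2 * `|g|.
have Q0 : 0 <= Q by rewrite /Q; have := normr_ge0 e; have := normr_ge0 g; lra.
have QdQ : Q / - d * d = - Q by field; rewrite lt_eqF.
exists (1 + Q / - d) => t Tt.
have t1 : 1 <= `|t|.
  have : 0 <= Q / - d by rewrite divr_ge0 // oppr_ge0 (ltW d0).
  lra.
have ttd : t ^+ 2 * d <= `|t| * d - `|t| * Q.
  rewrite -real_normK ?num_real // expr2 -mulrA.
  have : `|t| * d <= (1 + Q / - d) * d by rewrite ler_wnM2r ?(ltW d0).
  by rewrite mulrDl mul1r QdQ => h; nra.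
have := ler_norm e; have := ler_norm (t * g); rewrite normrM.
have : `|e| <= `|t| * `|e| by rewrite ler_peMl.
have : `|t| * d <= 0 by rewrite pmulr_rle0 ?(ltW d0) //; lra.
rewrite /Q in ttd; lra.
Qed.

Lemma quad_coefs_eq0_of_far_lbound T L c b a : a <= 0 ->
  (forall t, T <= `|t| -> L <= c + 2 * t * b + t ^+ 2 * a) -> a = 0 /\ b = 0.
Proof.
move=> a0 H.
have far t : Num.max T 0 <= t -> T <= `|t| /\ T <= `|- t|.
  by rewrite ge_max normrN => /andP[Tt t0]; rewrite ger0_norm.
have a_eq0 : a = 0.
  apply/eqP; rewrite eq_le a0 /=.
  apply: (@ge0_lead_of_ray_lbound (Num.max T 0) (L - c)) => t /far[Tt Tnt].
  by have := H _ Tt; have := H _ Tnt; rewrite sqrrN; lra.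
rewrite a_eq0 in H.
have nb : 0 <= - (2 * b).
  apply: (@ge0_slope_of_ray_lbound (Num.max T 0) L c) => t /far[_ /H].
  by rewrite mulr0 addr0 mulrN; lra.
have pb : 0 <= 2 * b.
  by apply: (@ge0_slope_of_ray_lbound (Num.max T 0) L c) => t /far[/H Ht _]; lra.
by split=> //; lra.
Qed.
End real_quadratics.

Section forms.
Variables (R : realType) (n : nat).
Implicit Types (M N : 'M[R]_n) (h x y z d : 'cV[R]_n) (s t : R).

Lemma lform_sym h x : lform h x = lform x h.
Proof. by rewrite /lform -[in RHS](trmxK h) -trmx_mul [RHS]mxE. Qed.

Lemma lformDr h x y : lform h (x + y) = lform h x + lform h y.
Proof. by rewrite /lform mulmxDr mxE. Qed.

Lemma lformZr h t x : lform h (t *: x) = t * lform h x.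
Proof. by rewrite /lform -scalemxAr mxE. Qed.

Lemma lformDl h x y : lform (x + y) h = lform x h + lform y h.
Proof. by rewrite !(lform_sym _ h) lformDr. Qed.

Lemma lformZl h t x : lform (t *: x) h = t * lform x h.
Proof. by rewrite !(lform_sym _ h) lformZr. Qed.

Lemma lform0r h : lform h 0 = 0.
Proof. by rewrite /lform mulmx0 mxE. Qed.

Lemma lform_sym_mulmx M x y : M^T = M -> lform x (M *m y) = lform y (M *m x).
Proof. by move=> sM; rewrite lform_sym /lform !trmx_mul sM !mulmxA. Qed.

Lemma qformE M x : qform M x = lform x (M *m x).
Proof. by rewrite /qform /lform mulmxA. Qed.

Lemma qformDl M N x : qform (M + N) x = qform M x + qform N x.
Proof. by rewrite !qformE mulmxDl lformDr. Qed.

Lemma qformZl M s x : qform (s *: M) x = s * qform M x.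
Proof. by rewrite !qformE -scalemxAl lformZr. Qed.

Lemma qformZr M t x : qform M (t *: x) = t ^+ 2 * qform M x.
Proof. by rewrite !qformE -scalemxAr lformZl lformZr mulrA -expr2. Qed.

Lemma qform_ker M x : M *m x = 0 -> qform M x = 0.
Proof. by rewrite qformE => ->; rewrite lform0r. Qed.

Lemma qformDZr M x y t : M^T = M ->
  qform M (x + t *: y) = qform M x + 2 * t * lform y (M *m x) + t ^+ 2 * qform M y.
Proof.
move=> sM; rewrite !qformE mulmxDr -scalemxAr lformDl lformZl !lformDr !lformZr.
by rewrite (lform_sym_mulmx _ _ sM); ring.
Qed.

Lemma qp_objDZr M h x d t : M^T = M ->
  qp_obj M h (x + t *: d) =
  qp_obj M h x + 2 * t * (lform d (M *m x) - lform h d) + t ^+ 2 * qform M d.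
Proof. by move=> sM; rewrite /qp_obj qformDZr // lformDr lformZr; ring. Qed.

Lemma qp_objDZl M N h x y s :
  qp_obj (M + s *: N) (h + s *: x) y = qp_obj M h y + s * qp_obj N x y.
Proof. by rewrite /qp_obj qformDl qformZl lformDl lformZl; ring. Qed.

Lemma qp_objDZr_ker M h x d t : M^T = M -> M *m d = 0 ->
  qp_obj M h (x + t *: d) = qp_obj M h x - 2 * t * lform h d.
Proof.
by move=> sM Md; rewrite qp_objDZr // qform_ker // lform_sym_mulmx // Md lform0r; ring.
Qed.

Lemma qp_obj_ker M h x z : M^T = M -> M *m z = 0 -> lform h z = 0 ->
  qp_obj M h (x + z) = qp_obj M h x.
Proof. by move=> sM Mz hz; rewrite -[z]scale1r qp_objDZr_ker // hz mulr0 subr0. Qed.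

Lemma qp_feasE M h mu x : qp_feas M h mu x = (qp_obj M h x <= mu).
Proof. by []. Qed.

Definition sqnorm x := lform x x.

Lemma sqnormE x : sqnorm x = \sum_i x i 0 ^+ 2.
Proof. by rewrite /sqnorm /lform mxE; apply: eq_bigr => i _; rewrite mxE expr2. Qed.

Lemma sqnorm_ge0 x : 0 <= sqnorm x.
Proof. by rewrite sqnormE sumr_ge0 // => i _; rewrite sqr_ge0. Qed.

Lemma sqnorm_eq0 x : sqnorm x = 0 -> x = 0.
Proof.
rewrite sqnormE => /eqP; rewrite psumr_eq0 => [/allP x0|i _]; last by rewrite sqr_ge0.
apply/matrixP => i j; rewrite (ord1 j) mxE.
by have /= := x0 i (mem_index_enum _); rewrite sqrf_eq0 => /eqP.
Qed.

Lemma sqr_coord_le_sqnorm x i : x i 0 ^+ 2 <= sqnorm x.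
Proof. by rewrite sqnormE (bigD1 i) //= lerDl sumr_ge0 // => j _; rewrite sqr_ge0. Qed.

Lemma qform1 x : qform 1%:M x = sqnorm x.
Proof. by rewrite qformE mul1mx. Qed.

Lemma sqnormZ t x : sqnorm (t *: x) = t ^+ 2 * sqnorm x.
Proof. by rewrite -!qform1 qformZr. Qed.

Lemma lform_young h y e : 2 * e * lform h y <= sqnorm h + e ^+ 2 * sqnorm y.
Proof.
have := sqnorm_ge0 (h + (- e) *: y).
by rewrite /sqnorm !lformDl !lformDr !lformZl !lformZr (lform_sym y h); lra.
Qed.

Lemma psd_qform_eq0 M x : M^T = M -> psd M -> qform M x = 0 -> M *m x = 0.
Proof.
move=> sM psdM Mx0.
have orth y : lform y (M *m x) = 0.
  have /eqP : 2 * lform y (M *m x) = 0.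
    apply: (@slope_eq0_of_quad_ge0 _ (qform M y)) => t.
    by have := psdM (x + t *: y); rewrite qformDZr // Mx0; lra.
  by rewrite mulf_eq0 pnatr_eq0 => /eqP.
by apply: sqnorm_eq0; apply: orth.
Qed.

Lemma sym_range_of_orth_ker M v : M^T = M ->
  (forall k, M *m k = 0 -> lform v k = 0) -> exists w, v = M *m w.
Proof.
move=> sM vker.
have vC : v^T *m cokermx M = 0.
  apply/matrixP => i j; rewrite (ord1 i) [RHS]mxE.
  have := vker (cokermx M *m delta_mx j 0); rewrite mulmxA mulmx_coker mul0mx.
  by move/(_ erefl); rewrite /lform mulmxA -colE mxE.
have /submxP[D vD] : (v^T <= M)%MS by rewrite submxE vC.
by exists D^T; rewrite -[v]trmxK vD trmx_mul sM.
Qed.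

Lemma qp_min_of_lbound M h L : M^T = M -> (forall x, L <= qp_obj M h x) ->
  exists w, forall x, qp_obj M h w <= qp_obj M h x.
Proof.
move=> sM bdd.
have psdM : psd M.
  move=> v; apply: (@ge0_lead_of_lbound _ L _ (- 2 * lform h v)) => t.
  by have := bdd (t *: v); rewrite /qp_obj qformZr lformZr; lra.
have h_orth k : M *m k = 0 -> lform h k = 0.
  move=> Mk; have : - 2 * lform h k = 0.
    apply: (@slope_eq0_of_lbound _ L 0) => t.
    by have := bdd (t *: k); rewrite /qp_obj qformZr qform_ker // lformZr; lra.
  by move/eqP; rewrite mulf_eq0 oppr_eq0 pnatr_eq0 => /eqP.
have [w hw] := sym_range_of_orth_ker sM h_orth.
(* [h = M w] makes [w] stationary: [qp_obj M h (w + y) = qp_obj M h w + qform M y]. *)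
exists w => x; rewrite -(subrKC w x) -[x - w]scale1r qp_objDZr // -hw.
by rewrite lform_sym subrr mulr0 addr0 expr1n mul1r lerDl.
Qed.

Lemma sqnorm_le_of_coercive M h y eps c :
  0 < eps -> eps * sqnorm y <= qform M y -> qp_obj M h y <= c ->
  sqnorm y <= 2 * c / eps + 4 * sqnorm h / eps ^+ 2.
Proof.
move=> eps0 coer obj_le.
have e2 : 0 < eps ^+ 2 by rewrite exprn_gt0.
rewrite -(ler_pM2l e2) (_ : _ * (_ + _) = 2 * eps * c + 4 * sqnorm h).
  2: by field; rewrite gt_eqF.
have := lform_young h y (eps / 2).
rewrite (_ : 2 * (eps / 2) = eps) ?expr_div_n; last by field.
have : eps * (eps * sqnorm y) <= eps * (c + 2 * lform h y).
  by rewrite ler_pM2l //; move: obj_le; rewrite /qp_obj; lra.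
rewrite !expr2; nra.
Qed.
End forms.

(* Its kernel is the range of [A A + B B], i.e. the orthogonal complement of
   [ker A /\ ker B]. *)
Definition common_coker {R : realType} {n : nat} (A B : 'M[R]_n) : 'M[R]_n :=
  (cokermx (A *m A + B *m B))^T.

Section common_kernel.
Variables (R : realType) (n : nat) (A B : 'M[R]_n).
Hypotheses (sA : A^T = A) (sB : B^T = B).
Implicit Types (f g k x y : 'cV[R]_n).

Local Notation P := (A *m A + B *m B).

Let sP : P^T = P.
Proof. by rewrite raddfD /= !trmx_mul sA sB. Qed.

Let kerP k : P *m k = 0 -> A *m k = 0 /\ B *m k = 0.
Proof.
move=> Pk; have : sqnorm (A *m k) + sqnorm (B *m k) = 0.
  rewrite /sqnorm (lform_sym_mulmx (A *m k) k sA) (lform_sym_mulmx (B *m k) k sB).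
  by rewrite !mulmxA -lformDr -mulmxDl Pk lform0r.
by move/eqP; rewrite paddr_eq0 ?sqnorm_ge0 // => /andP[/eqP/sqnorm_eq0 -> /eqP/sqnorm_eq0 ->].
Qed.

Lemma common_coker_ker y :
  common_coker A B *m y = 0 -> A *m y = 0 -> B *m y = 0 -> y = 0.
Proof.
move=> Ky Ay By.
have /submxP[D yD] : (y^T <= P)%MS by rewrite submxE -[cokermx _]trmxK -trmx_mul Ky trmx0.
have yPD : y = P *m D^T by rewrite -[y]trmxK yD trmx_mul sP.
apply: sqnorm_eq0; rewrite /sqnorm {2}yPD lform_sym_mulmx //.
by rewrite mulmxDl -!mulmxA Ay By !mulmx0 addr0 lform0r.
Qed.

Lemma common_coker_decomp f g :
  (forall k, A *m k = 0 -> B *m k = 0 -> lform f k = 0 /\ lform g k = 0) ->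
  forall x, exists y, [/\ common_coker A B *m y = 0, qp_obj A f y = qp_obj A f x
                                                 & qp_obj B g y = qp_obj B g x].
Proof.
move=> fg_orth x.
have sPP : (P *m P)^T = P *m P by rewrite trmx_mul sP.
have PP_orth k : (P *m P) *m k = 0 -> lform (P *m x) k = 0.
  move=> PPk; have Pk : P *m k = 0.
    by apply: sqnorm_eq0; rewrite /sqnorm lform_sym_mulmx // mulmxA PPk lform0r.
  by rewrite lform_sym lform_sym_mulmx // Pk lform0r.
have [u Pxu] := sym_range_of_orth_ker sPP PP_orth.
have [Az Bz] : A *m (x - P *m u) = 0 /\ B *m (x - P *m u) = 0.
  by apply: kerP; rewrite mulmxBr Pxu mulmxA subrr.
have [fz gz] := fg_orth _ Az Bz.
exists (P *m u); split.
- have : (P *m u)^T *m cokermx P = 0 by rewrite trmx_mul sP -mulmxA mulmx_coker mulmx0.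
  by move/(congr1 trmx); rewrite trmx_mul trmxK trmx0.
- by rewrite -[in RHS](subrKC (P *m u) x) qp_obj_ker.
- by rewrite -[in RHS](subrKC (P *m u) x) qp_obj_ker.
Qed.
End common_kernel.

Section compactness.
Variables (R : realType) (n : nat).
Implicit Types (M : 'M[R]_n) (h : 'cV[R]_n).

Lemma continuous_sum (I : Type) (r : seq I) (F : I -> 'rV[R]_n -> R) :
  (forall i, continuous (F i)) -> continuous (fun v => \sum_(i <- r) F i v).
Proof. by move=> Fc; apply: continuous_big => // -[x y]; exact: add_continuous. Qed.

Lemma continuous_mulmx_coord m (N : 'M[R]_(n, m)) j :
  continuous (fun v : 'rV[R]_n => (v *m N) 0 j).
Proof.
under eq_fun do rewrite mxE.
by apply: continuous_sum => i v; apply: continuousM; [exact: coord_continuous|exact: cst_continuous].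
Qed.

Lemma continuous_lform h : continuous (fun v : 'rV[R]_n => lform h v^T).
Proof.
under eq_fun do rewrite lform_sym /lform trmxK.
exact: continuous_mulmx_coord.
Qed.

Lemma continuous_qform M : continuous (fun v : 'rV[R]_n => qform M v^T).
Proof.
have qE v : qform M v^T = \sum_j (v *m M) 0 j * v 0 j.
  by rewrite /qform trmxK mxE; apply: eq_bigr => j _; rewrite [v^T _ _]mxE.
under eq_fun do rewrite qE.
apply: continuous_sum => j v; apply: continuousM; first exact: continuous_mulmx_coord.
exact: coord_continuous.
Qed.

Lemma continuous_sqnorm : continuous (fun v : 'rV[R]_n => sqnorm v^T).
Proof. by under eq_fun do rewrite -qform1; exact: continuous_qform. Qed.

Lemma continuous_qp_obj M h : continuous (fun v : 'rV[R]_n => qp_obj M h v^T).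
Proof.
move=> v; apply: (@continuousB R R^o _ (fun v => qform M v^T) (fun v => 2 * lform h v^T)).
  exact: continuous_qform.
by apply: continuousM; [exact: cst_continuous|exact: continuous_lform].
Qed.

Lemma closed_le_of_continuous (T : topologicalType) (F : T -> R) b :
  continuous F -> closed [set v | F v <= b].
Proof.
move=> Fc; rewrite (_ : [set v | _] = F @^-1` [set x | x <= b]) //.
by apply: (proj1 (continuous_closedP F) Fc); exact: closed_le.
Qed.

Lemma closed_eq_of_continuous (T : topologicalType) (F : T -> R) b :
  continuous F -> closed [set v | F v = b].
Proof.
move=> Fc; rewrite (_ : [set v | _] = F @^-1` [set x | x = b]) //.
by apply: (proj1 (continuous_closedP F) Fc); exact: closed_eq.
Qed.

Lemma bounded_set_of_coord_le (S : set 'rV[R]_n) b :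
  (forall v, S v -> forall i, `|v 0 i| <= b) -> bounded_set S.
Proof.
move=> Sb; rewrite /bounded_set /bounded_near; near=> M => v Sv /=.
apply: (@le_trans _ _ (Num.max b 0)).
  rewrite /Num.Def.normr /= mx_normrE; apply: bigmax_le => [|[i j] _] /=.
    by rewrite le_max lexx orbT.
  by rewrite (ord1 i) le_max Sb.
by near: M; apply: nbhs_pinfty_ge; exact: num_real.
Unshelve. all: by end_near.
Qed.

(* Compactness of bounded closed sets is available for row vectors, hence the transposes. *)
Lemma min_attained_of_bounded (S : 'cV[R]_n -> Prop) (F : 'cV[R]_n -> R) b :
  closed [set v : 'rV[R]_n | S v^T] -> continuous (fun v : 'rV[R]_n => F v^T) ->
  (exists y, S y) -> (forall y, S y -> sqnorm y <= b) ->
  exists2 c, S c & forall y, S y -> F c <= F y.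
Proof.
move=> Sclosed Fc [y Sy] Sb.
have Sbounded : bounded_set [set v : 'rV[R]_n | S v^T].
  apply: (@bounded_set_of_coord_le _ (1 + b)) => v /Sb vb i.
  have := le_trans (sqr_coord_le_sqnorm v^T i) vb; rewrite mxE -(real_normK (num_real _)).
  by have := normr_ge0 (v 0 i); nra.
have Sne : [set v : 'rV[R]_n | S v^T] !=set0 by exists y^T; rewrite /= trmxK.
have [c Sc cmin] := EVT_min_rV Sne (bounded_closed_compact Sbounded Sclosed)
  (continuous_subspaceT Fc).
exists c^T => [|x Sx]; first by move: Sc; rewrite inE.
by rewrite -[x]trmxK; apply: cmin; rewrite inE /= trmxK.
Qed.
End compactness.

Section coercivity.
Variables (R : realType) (n m : nat) (K : 'M[R]_(m, n)).

Lemma closed_ker : closed [set v : 'rV[R]_n | K *m v^T = 0].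
Proof.
rewrite (_ : [set v | _] = [set v | qform (K^T *m K) v^T = 0]).
  exact/closed_eq_of_continuous/continuous_qform.
apply/seteqP; split=> v /=; first by rewrite qformE -mulmxA => ->; rewrite mulmx0 lform0r.
by rewrite qformE -mulmxA /lform mulmxA -trmx_mul => /sqnorm_eq0.
Qed.

Lemma coercive_on_ker (F : 'cV[R]_n -> R) :
  continuous (fun v : 'rV[R]_n => F v^T) -> (forall t y, F (t *: y) = t ^+ 2 * F y) ->
  (forall y, K *m y = 0 -> y != 0 -> 0 < F y) ->
  exists2 eps, 0 < eps & forall y, K *m y = 0 -> eps * sqnorm y <= F y.
Proof.
move=> Fc Fhom Fpos.
have F0 : F 0 = 0 by have := Fhom 0 0; rewrite scale0r expr2 !mul0r.
have sqnorm0 : sqnorm (0 : 'cV[R]_n) = 0 by rewrite /sqnorm lform0r.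
pose S y := K *m y = 0 /\ sqnorm y = 1.
have normalize y : K *m y = 0 -> y != 0 ->
    S ((Num.sqrt (sqnorm y))^-1 *: y) /\ sqnorm y = Num.sqrt (sqnorm y) ^+ 2.
  move=> Ky y0; have y_gt0 : 0 < sqnorm y.
    by rewrite lt_neqAle sqnorm_ge0 andbT eq_sym; apply: contra y0 => /eqP/sqnorm_eq0->.
  rewrite sqr_sqrtr ?ltW //; split=> //; split; first by rewrite -scalemxAr Ky scaler0.
  by rewrite sqnormZ exprVn sqr_sqrtr ?ltW // mulVf ?gt_eqF.
have [[s0 Ss0]|noS] := pselect (exists y, S y); last first.
  exists 1 => // y Ky; have [->|y0] := eqVneq y 0.
    by rewrite sqnorm0 F0 mulr0.
  by case: noS; exists ((Num.sqrt (sqnorm y))^-1 *: y); exact: (normalize _ Ky y0).1.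
have Sclosed : closed [set v : 'rV[R]_n | S v^T].
  apply: closedI; first exact: closed_ker.
  exact/closed_eq_of_continuous/continuous_sqnorm.
have Sbounded y : S y -> sqnorm y <= 1 by move=> [_ ->].
have [c [Kc c1] cmin] := min_attained_of_bounded Sclosed Fc (ex_intro _ _ Ss0) Sbounded.
exists (F c) => [|y Ky].
  by apply: Fpos Kc _; apply: contra_eq_neq c1 => ->; rewrite sqnorm0 eq_sym oner_eq0.
have [->|y0] := eqVneq y 0; first by rewrite sqnorm0 F0 mulr0.
have [] := normalize _ Ky y0; set r := Num.sqrt _ => Sz yr.
have r2_neq0 : r ^+ 2 != 0 by rewrite -yr; apply: contra y0 => /eqP/sqnorm_eq0->.
have := cmin _ Sz; rewrite Fhom exprVn => /(ler_wpM2l (sqr_ge0 r)).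
by rewrite yr mulrA mulfV // mul1r mulrC.
Qed.
End coercivity.

Definition qp_attained {R : realType} {n : nat} (A B : 'M[R]_n) (f g : 'cV[R]_n) (mu : R) :=
  exists xs, qp_feas B g mu xs /\
    forall x, qp_feas B g mu x -> qp_obj A f xs <= qp_obj A f x.

Section qp1qc.
Variables (R : realType) (n : nat) (A B : 'M[R]_n) (f g : 'cV[R]_n) (mu L : R).
Hypotheses (sA : A^T = A) (sB : B^T = B).
Hypothesis obj_lbound : forall x, qp_feas B g mu x -> L <= qp_obj A f x.
Implicit Types (d x y : 'cV[R]_n).

Lemma qp_attained_of_descent_dir d :
  qform A d <= 0 -> qform B d < 0 -> qp_attained A B f g mu.
Proof.
move=> Ad Bd.
have feas_far x : exists T, forall t, T <= `|t| -> qp_feas B g mu (x + t *: d).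
  have [T HT] := concave_quad_le0_far (qp_obj B g x - mu) (lform d (B *m x) - lform g d) Bd.
  by exists T => t /HT; rewrite qp_feasE qp_objDZr //; lra.
have obj_inv x t : qp_obj A f (x + t *: d) = qp_obj A f x.
  have [T HT] := feas_far x.
  have [Ad0 coef0] : qform A d = 0 /\ lform d (A *m x) - lform f d = 0.
    apply: (quad_coefs_eq0_of_far_lbound (T := T) (L := L) (c := qp_obj A f x)) => //.
    by move=> s /HT/obj_lbound; rewrite qp_objDZr.
  by rewrite qp_objDZr // Ad0 coef0; ring.
have obj_bdd x : L <= qp_obj A f x.
  have [T HT] := feas_far x.
  by rewrite -(obj_inv x T); apply/obj_lbound/HT/ler_norm.
have [w wmin] := qp_min_of_lbound sA obj_bdd.
have [T HT] := feas_far w.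
by exists (w + T *: d); split=> [|x _]; [exact/HT/ler_norm | rewrite obj_inv wmin].
Qed.

Lemma qp_attained_of_kernel_dir d :
  A *m d = 0 -> B *m d = 0 -> lform g d != 0 -> qp_attained A B f g mu.
Proof.
move=> Ad Bd gd.
pose e := (lform g d)^-1 *: d.
have Ae : A *m e = 0 by rewrite -scalemxAr Ad scaler0.
have Be : B *m e = 0 by rewrite -scalemxAr Bd scaler0.
have ge : lform g e = 1 by rewrite lformZr mulVf.
pose lam := - lform f e.
have lam_ge0 : 0 <= lam.
  suff : 0 <= 2 * lam by lra.
  apply: (@ge0_slope_of_ray_lbound _ ((qp_obj B g 0 - mu) / 2) L (qp_obj A f 0)) => t t_ge.
  have := obj_lbound (x := 0 + t *: e).
  by rewrite qp_feasE !qp_objDZr_ker // ge /lam; lra.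
have sAB : (A + lam *: B)^T = A + lam *: B by rewrite linearD linearZ /= sA sB.
(* [active x] lies on the boundary of the constraint, where the objective is the
   Lagrangian with multiplier [lam]. *)
pose active x := x + ((qp_obj B g x - mu) / 2) *: e.
have active_feas x : qp_obj B g (active x) = mu.
  by rewrite qp_objDZr_ker // ge; field.
have active_obj x : qp_obj A f (active x) = qp_obj (A + lam *: B) (f + lam *: g) x - lam * mu.
  by rewrite qp_objDZr_ker // qp_objDZl /lam; field.
have lagr_bdd x : L + lam * mu <= qp_obj (A + lam *: B) (f + lam *: g) x.
  have := obj_lbound (x := active x).
  by rewrite qp_feasE active_feas active_obj => /(_ (lexx mu)); lra.
have [w wmin] := qp_min_of_lbound sAB lagr_bdd.
exists (active w); split=> [|x]; first by rewrite qp_feasE active_feas.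
rewrite qp_feasE active_obj => x_feas.
have := wmin x; rewrite !qp_objDZl.
have : lam * (qp_obj B g x - mu) <= 0 by rewrite mulr_ge0_le0 // subr_le0.
lra.
Qed.

Lemma qp_attained_of_coercive (K : 'M[R]_n) eps : 0 < eps ->
  (forall y, K *m y = 0 -> eps * sqnorm y <= Num.max (qform A y) (qform B y)) ->
  (forall x, exists y, [/\ K *m y = 0, qp_obj A f y = qp_obj A f x
                                    & qp_obj B g y = qp_obj B g x]) ->
  (exists x0, qp_feas B g mu x0) -> qp_attained A B f g mu.
Proof.
move=> eps0 coer reduce [x0 x0_feas].
have [y0 [Ky0 y0_obj y0_con]] := reduce x0.
pose c0 := qp_obj A f y0.
pose S y := (K *m y = 0 /\ qp_obj B g y <= mu) /\ qp_obj A f y <= c0.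
have S_closed : closed [set v : 'rV[R]_n | S v^T].
  apply: closedI; first apply: closedI; first exact: closed_ker.
    exact/closed_le_of_continuous/continuous_qp_obj.
  exact/closed_le_of_continuous/continuous_qp_obj.
have S_bdd y : S y -> sqnorm y <= Num.max (2 * c0 / eps + 4 * sqnorm f / eps ^+ 2)
                                          (2 * mu / eps + 4 * sqnorm g / eps ^+ 2).
  move=> [[Ky y_feas] y_obj]; rewrite le_max.
  by have := coer y Ky; rewrite le_max => /orP[] coerM; apply/orP; [left|right];
    exact: sqnorm_le_of_coercive coerM _.
have Sy0 : S y0 by split; first split; rewrite // y0_con.
have [c [[Kc c_feas] c_obj] cmin] :=
  min_attained_of_bounded S_closed (@continuous_qp_obj _ _ A f) (ex_intro _ y0 Sy0) S_bdd.
exists c; split=> // x x_feas.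
have [y [Ky <- y_con]] := reduce x.
have [y_le|y_gt] := lerP (qp_obj A f y) c0; last exact: le_trans c_obj (ltW y_gt).
by apply: cmin; split; first split; rewrite // y_con.
Qed.

Lemma psd_pencil_ker s1 s2 y : s1 != s2 -> I_psd A B s1 -> I_psd A B s2 ->
  qform A y = 0 -> qform B y = 0 -> A *m y = 0 /\ B *m y = 0.
Proof.
move=> s12 psd1 psd2 Ay By.
have pencil_ker s : I_psd A B s -> A *m y + s *: (B *m y) = 0.
  move=> psds; rewrite scalemxAl -mulmxDl; apply: psd_qform_eq0 psds _.
    by rewrite linearD linearZ /= sA sB.
  by rewrite qformDl qformZl Ay By mulr0 addr0.
have By0 : B *m y = 0.
  have : (A *m y + s2 *: (B *m y)) - (A *m y + s1 *: (B *m y)) = (s2 - s1) *: (B *m y).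
    by rewrite opprD addrACA subrr add0r scalerBl.
  rewrite !pencil_ker // subrr => /esym/eqP.
  by rewrite scaler_eq0 subr_eq0 eq_sym (negPf s12) => /eqP.
by split=> //; move: (pencil_ker _ psd1); rewrite By0 scaler0 addr0.
Qed.

Lemma pencil_coercive s1 s2 : s1 != s2 -> I_psd A B s1 -> I_psd A B s2 ->
  (forall d, qform B d < 0 -> 0 < qform A d) ->
  exists2 eps, 0 < eps & forall y, common_coker A B *m y = 0 ->
    eps * sqnorm y <= Num.max (qform A y) (qform B y).
Proof.
move=> s12 psd1 psd2 no_descent.
apply: coercive_on_ker => [v|t y|y Ky y_neq0].
- exact: (continuous_max (@continuous_qform _ _ A v) (@continuous_qform _ _ B v)).
- by rewrite !qformZr maxr_pMr ?sqr_ge0.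
rewrite lt_max !ltNge -negb_and; apply: contra y_neq0 => /andP[Ay By].
have By0 : qform B y = 0.
  by apply/eqP; rewrite eq_le By leNgt; apply: contraTN Ay => /no_descent; rewrite -ltNge.
have Ay0 : qform A y = 0.
  by apply/eqP; rewrite eq_le Ay; have := psd1 y; rewrite qformDl qformZl By0 mulr0 addr0.
have [Ay_eq0 By_eq0] := psd_pencil_ker s12 psd1 psd2 Ay0 By0.
by rewrite (common_coker_ker sA sB Ky Ay_eq0 By_eq0).
Qed.

Lemma qp_attained_of_psd_pencil s1 s2 : s1 != s2 -> I_psd A B s1 -> I_psd A B s2 ->
  (exists x0, qp_feas B g mu x0) ->
  (forall d, qform B d < 0 -> 0 < qform A d) ->
  (forall d, A *m d = 0 -> B *m d = 0 -> lform g d = 0) ->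
  qp_attained A B f g mu.
Proof.
move=> s12 psd1 psd2 [x0 x0_feas] no_descent g_orth.
have fg_orth d : A *m d = 0 -> B *m d = 0 -> lform f d = 0 /\ lform g d = 0.
  move=> Ad Bd; split; last exact: g_orth.
  have : - 2 * lform f d = 0.
    apply: (@slope_eq0_of_lbound _ L (qp_obj A f x0)) => t.
    have := obj_lbound (x := x0 + t *: d).
    rewrite qp_feasE !qp_objDZr_ker // g_orth // mulr0 subr0.
    by move=> /(_ x0_feas); lra.
  by move/eqP; rewrite mulf_eq0 oppr_eq0 pnatr_eq0 => /eqP.
have [eps eps0 coer] := pencil_coercive s12 psd1 psd2 no_descent.
exact: (qp_attained_of_coercive eps0 coer (common_coker_decomp sA sB fg_orth)
  (ex_intro _ x0 x0_feas)).
Qed.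
End qp1qc.

Theorem theorem6 (R : realType) (n : nat) (A B : 'M[R]_n) (f g : 'cV[R]_n) (mu : R) :
  A^T = A -> B^T = B ->
  (* primal Slater condition *)
  (exists x0 : 'cV[R]_n, qform B x0 - 2 * lform g x0 < mu) ->
  (* finite optimal value *)
  (exists L : R, forall x : 'cV[R]_n, qp_feas B g mu x -> L <= qp_obj A f x) ->
  (* I_psd(A,B) is an interval with more than one point *)
  (exists s1 s2 : R, s1 != s2 /\ I_psd A B s1 /\ I_psd A B s2) ->
  (* the infimum is attained *)
  exists xs : 'cV[R]_n, qp_feas B g mu xs /\
    forall x : 'cV[R]_n, qp_feas B g mu x -> qp_obj A f xs <= qp_obj A f x.
Proof.
move=> sA sB [x0 x0_slater] [L obj_lbound] [s1 [s2 [s12 [psd1 psd2]]]].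
change (qp_attained A B f g mu).
have [[d [Ad Bd]]|no_descent] :=
  pselect (exists d, qform A d <= 0 /\ qform B d < 0).
  exact (qp_attained_of_descent_dir sA sB obj_lbound Ad Bd).
have [[d [Ad Bd gd]]|g_orth] :=
  pselect (exists d, [/\ A *m d = 0, B *m d = 0 & lform g d != 0]).
  exact (qp_attained_of_kernel_dir sA sB obj_lbound Ad Bd gd).
have A_pos d : qform B d < 0 -> 0 < qform A d.
  by move=> Bd; rewrite ltNge; apply/negP => Ad; apply: no_descent; exists d.
have g_ker d : A *m d = 0 -> B *m d = 0 -> lform g d = 0.
  by move=> Ad Bd; apply/eqP/negPn/negP => gd; apply: g_orth; exists d.
exact (qp_attained_of_psd_pencil sA sB obj_lbound s12 psd1 psd2
  (ex_intro _ x0 (ltW x0_slater)) A_pos g_ker).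
Qed.
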